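(* Let $\tau_i$ be a task with period $p_i$ and execution time $c_i$, and let $\omega_k$ be a busy interval of length $l_k$ in a schedule as described in the context. Let $N\ge 0$ be an integer. (i) If $(Np_i-c_i)^+\le l_k<Np_i+c_i$, where $x^+=\max(x,0)$, then $\omega_k$ contains exactly $N$ jobs of $\tau_i$. (ii) If $Np_i+c_i\le l_k<(N+1)p_i-c_i$, then $\omega_k$ contains either $N$ or $N+1$ jobs of $\tau_i$.
   Context: Model: a single processor runs a set of periodic tasks $\tau_1,\dots,\tau_n$ under a preemptive, work-conserving, fixed-priority scheduler. Work-conserving means the processor is never idle while some released job is unfinished. Each task $\tau_i$ has a period $p_i>0$, a constant execution time $c_i$ with $0<c_i\le p_i$, an initial arrival time (offset) $a_i$, and a distinct fixed priority. Its $h$-th job is released at time $\sigma^{\tau_i}_h=a_i+hp_i$, for every $h\in\mathbb{Z}$; the schedule is considered as running forever in both directions of time. Each job needs exactly $c_i$ units of processor time. The schedule is assumed feasible, meaning every busy interval has finite length. A busy interval is a maximal time interval $[\alpha,\beta)$ during which the processor is continuously executing jobs. Its length is $l=\beta-\alpha$. Distinct busy intervals are separated by idle time. A busy interval contains a job if that job executes during it. Equivalently, the number of jobs of $\tau_i$ contained in $[\alpha,\beta)$ equals $|\{h\in\mathbb{Z}:\sigma^{\tau_i}_h\in[\alpha,\beta)\}|$. *)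

From Stdlib Require Import Reals List ZArith.
Open Scope R_scope.

(* A job is identified by (task index i, job index h : Z). *)
Definition job := (nat * Z)%type.

Definition job_eqb (j k : job) : bool :=
  (Nat.eqb (fst j) (fst k) && Z.eqb (snd j) (snd k))%bool.

Definition release (a p : nat -> R) (i : nat) (h : Z) : R := a i + IZR h * p i.

(* A (uniprocessor) schedule: at time t, either the processor is idle (None)
   or it executes the job Some (i,h). *)
Definition schedule := R -> option job.

Definition ind (s : schedule) (j : job) (t : R) : R :=
  match s t with
  | Some j' => if job_eqb j' j then 1 else 0
  | None => 0
  end.

(* Regularity: the execution-time indicators are Riemann integrable on every
   bounded interval, so that "processor time received" is well-defined. *)
Definition integrable_schedule (s : schedule) :=
  forall (j : job) (x y : R), Riemann_integrable (ind s j) x y.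

Definition service (s : schedule) (Hs : integrable_schedule s) (j : job) (x y : R) : R :=
  RiemannInt (Hs j x y).

Definition pending (a p c : nat -> R) (s : schedule) (Hs : integrable_schedule s)
  (i : nat) (h : Z) (t : R) : Prop :=
  release a p i h <= t /\ service s Hs (i, h) (release a p i h) t < c i.

Definition busy (s : schedule) (t : R) : Prop := s t <> None.

(* Preemptive, work-conserving, fixed-priority schedule of tasks 0..n-1
   (smaller prio value = higher priority). *)
Definition valid_schedule (n : nat) (a p c : nat -> R) (prio : nat -> nat)
  (s : schedule) (Hs : integrable_schedule s) : Prop :=
  (forall t i h, s t = Some (i, h) -> (i < n)%nat /\ pending a p c s Hs i h t) /\
  (forall i h, (i < n)%nat ->
     exists t, release a p i h <= t /\ service s Hs (i, h) (release a p i h) t = c i) /\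
  (forall t i h, (i < n)%nat -> pending a p c s Hs i h t -> busy s t) /\
  (forall t i h i' h', s t = Some (i, h) -> (i' < n)%nat ->
     pending a p c s Hs i' h' t -> (prio i <= prio i')%nat).

(* Feasibility: every busy interval has finite length, i.e. idle times occur
   arbitrarily far in the future and in the past. *)
Definition feasible (s : schedule) : Prop :=
  forall t0, (exists t, t0 <= t /\ ~ busy s t) /\ (exists t, t <= t0 /\ ~ busy s t).

Definition busy_interval (s : schedule) (alpha beta : R) : Prop :=
  alpha < beta /\
  (forall t, alpha <= t < beta -> busy s t) /\
  (forall alpha' beta', alpha' <= alpha -> beta <= beta' ->
     (forall t, alpha' <= t < beta' -> busy s t) -> alpha' = alpha /\ beta' = beta).

Definition num_jobs_in (a p : nat -> R) (i : nat) (alpha beta : R) (k : nat) : Prop :=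
  exists l : list Z, NoDup l /\
    (forall h, In h l <-> alpha <= release a p i h < beta) /\ length l = k.

(** Because the schedule is work-conserving, a job of task [i] can be pending
    only while the processor is busy.  Hence every job of [i] released before
    a busy interval [[alpha, beta)] has completed before [alpha], so its release
    precedes [alpha - c_i]; and every job released inside the interval
    completes inside it, so its release is at most [beta - c_i].  Consequently
    the first release [r] of [i] at or after [alpha] lies in
    [[alpha, alpha + p_i - c_i)], and the jobs of [i] in the interval are those
    released at [r, r + p_i, ...] before [beta]; the bounds on [beta - alpha]
    then pin down their number. *)

From Pilot Require Import Defs.
From Stdlib Require Import Reals List ZArith.
From Stdlib Require Import Lra Lia Classical.
Open Scope R_scope.

Lemma service_le (s : schedule) (Hs : integrable_schedule s) (j : job) (x y : R) :
  x <= y -> service s Hs j x y <= y - x.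
Proof.
  intros Hxy. unfold service.
  rewrite <- (Rmult_1_l (y - x)), <- (RiemannInt_P15 (RiemannInt_P14 x y 1)).
  apply RiemannInt_P19; [assumption|].
  intros t _. unfold Defs.ind, fct_cte.
  destruct (s t) as [j'|]; simpl; [destruct (job_eqb j' j)|]; lra.
Qed.

Lemma release_sub (a p : nat -> R) (i : nat) (h h0 : Z) :
  release a p i h = release a p i h0 + IZR (h - h0) * p i.
Proof. unfold release. rewrite minus_IZR. ring. Qed.

Lemma release_shift (a p : nat -> R) (i : nat) (h0 : Z) (k : nat) :
  release a p i (h0 + Z.of_nat k) = release a p i h0 + INR k * p i.
Proof.
  rewrite (release_sub a p i _ h0), INR_IZR_INZ.
  replace (h0 + Z.of_nat k - h0)%Z with (Z.of_nat k) by lia. reflexivity.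
Qed.

Lemma exists_release_in (a p : nat -> R) (i : nat) (alpha : R) :
  0 < p i -> exists h, alpha <= release a p i h < alpha + p i.
Proof.
  intros Hp.
  set (y := (alpha - a i) / p i).
  destruct (archimed (- y)) as [Hup1 Hup2].
  exists (1 - up (- y))%Z.
  assert (Hy : y * p i = alpha - a i) by (unfold y; field; lra).
  unfold release. rewrite minus_IZR. split; nra.
Qed.

Lemma num_jobs_in_consecutive (a p : nat -> R) (i : nat) (alpha beta : R)
    (h0 : Z) (K : nat) :
  0 < p i ->
  alpha <= release a p i h0 -> release a p i h0 - p i < alpha ->
  release a p i h0 + (INR K - 1) * p i < beta ->
  beta <= release a p i h0 + INR K * p i ->
  num_jobs_in a p i alpha beta K.
Proof.
  intros Hp Hfirst Hprev Hlast Hnext.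
  exists (map (fun k => (h0 + Z.of_nat k)%Z) (seq 0 K)). split; [|split].
  - apply NoDup_map_NoDup_ForallPairs; [|apply seq_NoDup].
    intros x y _ _ E. lia.
  - intros h. rewrite in_map_iff. split.
    + intros [k [<- Hk]]. apply in_seq in Hk.
      rewrite release_shift.
      assert (HkK : INR k <= INR K - 1).
      { replace (INR K - 1) with (INR (K - 1)) by (rewrite minus_INR by lia; reflexivity).
        apply le_INR. lia. }
      pose proof (pos_INR k). split; nra.
    + rewrite (release_sub a p i h h0). intros [Hlo Hhi].
      assert (Hge : (h0 <= h)%Z).
      { destruct (Z_le_gt_dec h0 h) as [|Hlt]; [assumption|].
        assert (IZR (h - h0) <= -1) by (apply IZR_le; lia). nra. }
      assert (Hlt : (h - h0 < Z.of_nat K)%Z).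
      { apply lt_IZR. rewrite <- INR_IZR_INZ.
        destruct (Rlt_le_dec (IZR (h - h0)) (INR K)) as [|HK]; [assumption|].
        nra. }
      exists (Z.to_nat (h - h0)). split; [lia|]. apply in_seq. lia.
  - rewrite length_map, length_seq. reflexivity.
Qed.

Lemma busy_interval_idle_before (s : schedule) (alpha beta r : R) :
  busy_interval s alpha beta -> r < alpha ->
  exists t, r <= t < alpha /\ ~ busy s t.
Proof.
  intros [Hab [Hbusy Hmax]] Hr.
  apply NNPP. intros Hno.
  enough (r = alpha) by lra.
  apply (Hmax r beta); [lra|lra|].
  intros t Ht. destruct (Rlt_le_dec t alpha).
  - apply NNPP. intros Hidle. apply Hno. exists t. split; [lra|assumption].
  - apply Hbusy. lra.
Qed.

Lemma busy_interval_idle_after (s : schedule) (alpha beta x : R) :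
  busy_interval s alpha beta -> beta < x ->
  exists t, beta <= t < x /\ ~ busy s t.
Proof.
  intros [Hab [Hbusy Hmax]] Hx.
  apply NNPP. intros Hno.
  enough (x = beta) by lra.
  apply (Hmax alpha x); [lra|lra|].
  intros t Ht. destruct (Rlt_le_dec t beta).
  - apply Hbusy. lra.
  - apply NNPP. intros Hidle. apply Hno. exists t. split; [lra|assumption].
Qed.

Section ValidSchedule.

Variables (n : nat) (a p c : nat -> R) (prio : nat -> nat).
Variables (s : schedule) (Hs : integrable_schedule s).
Hypothesis Hvalid : valid_schedule n a p c prio s Hs.
Variables (i : nat) (alpha beta : R).
Hypothesis Hi : (i < n)%nat.
Hypothesis Hbusy : busy_interval s alpha beta.

(* A job unfinished at an idle instant would be pending there, contradicting
   work conservation; and it cannot have received more service than elapsed time. *)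
Lemma completed_before_idle (h : Z) (t : R) :
  ~ busy s t -> release a p i h <= t -> release a p i h + c i <= t.
Proof.
  intros Hidle Hrel.
  destruct Hvalid as [_ [_ [Hwc _]]].
  assert (Hdone : c i <= service s Hs (i, h) (release a p i h) t).
  { destruct (Rle_lt_dec (c i) (service s Hs (i, h) (release a p i h) t))
      as [|Hlt]; [assumption|].
    exfalso. apply Hidle, (Hwc t i h Hi). split; assumption. }
  pose proof (service_le s Hs (i, h) _ _ Hrel). lra.
Qed.

Lemma release_before_busy_interval (h : Z) :
  release a p i h < alpha -> release a p i h + c i < alpha.
Proof.
  intros Hrel.
  destruct (busy_interval_idle_before s alpha beta _ Hbusy Hrel)
    as [t [Ht Hidle]].
  pose proof (completed_before_idle h t Hidle (proj1 Ht)). lra.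
Qed.

Lemma release_in_busy_interval (h : Z) :
  alpha <= release a p i h < beta -> release a p i h + c i <= beta.
Proof.
  intros Hrel.
  destruct (Rle_lt_dec (release a p i h + c i) beta) as [|Hgt]; [assumption|].
  destruct (busy_interval_idle_after s alpha beta _ Hbusy Hgt) as [t [Ht Hidle]].
  pose proof (completed_before_idle h t Hidle ltac:(lra)). lra.
Qed.

End ValidSchedule.

Theorem theorem1 (n : nat) (a p c : nat -> R) (prio : nat -> nat)
  (s : schedule) (Hs : integrable_schedule s)
  (Hp : forall i, (i < n)%nat -> 0 < p i)
  (Hc : forall i, (i < n)%nat -> 0 < c i <= p i)
  (Hprio : forall i i', (i < n)%nat -> (i' < n)%nat -> prio i = prio i' -> i = i')
  (Hvalid : valid_schedule n a p c prio s Hs)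
  (Hfeas : feasible s)
  (i : nat) (Hi : (i < n)%nat) (alpha beta : R)
  (Hbusy : busy_interval s alpha beta) (N : nat) :
  (Rmax (INR N * p i - c i) 0 <= beta - alpha < INR N * p i + c i ->
     num_jobs_in a p i alpha beta N) /\
  (INR N * p i + c i <= beta - alpha < INR (N + 1) * p i - c i ->
     num_jobs_in a p i alpha beta N \/ num_jobs_in a p i alpha beta (N + 1)).
Proof.
  pose proof (Hp i Hi) as Hpi. pose proof (Hc i Hi) as Hci.
  destruct (exists_release_in a p i alpha Hpi) as [h0 [Hfirst Hfirst_ub]].
  set (r := release a p i h0) in *.
  assert (Hprev : r - p i + c i < alpha).
  { assert (E : release a p i (h0 - 1) = r - p i).
    { rewrite (release_sub a p i _ h0). replace (h0 - 1 - h0)%Z with (-1)%Z by lia.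
      fold r. lra. }
    rewrite <- E. apply (release_before_busy_interval n a p c prio s Hs Hvalid i alpha beta);
      [assumption|assumption|lra]. }
  assert (Hjob_N_completes : r + INR N * p i < beta -> r + INR N * p i + c i <= beta).
  { pose proof (release_in_busy_interval n a p c prio s Hs Hvalid i alpha beta Hi Hbusy
      (h0 + Z.of_nat N)) as Hin.
    rewrite release_shift in Hin. fold r in Hin.
    intros Hlt. apply Hin. pose proof (pos_INR N). nra. }
  rewrite plus_INR; simpl INR.
  split.
  - intros [Hlo Hhi]. pose proof (Rmax_l (INR N * p i - c i) 0).
    assert (Hnext : beta <= r + INR N * p i).
    { destruct (Rle_lt_dec beta (r + INR N * p i)) as [|Hlt]; [assumption|].
      specialize (Hjob_N_completes Hlt). lra. }
    apply (num_jobs_in_consecutive a p i alpha beta h0 N); fold r; lra.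
  - intros [Hlo Hhi].
    destruct (Rle_lt_dec beta (r + INR N * p i)) as [Hge|Hlt].
    + left. apply (num_jobs_in_consecutive a p i alpha beta h0 N); fold r; lra.
    + right. apply (num_jobs_in_consecutive a p i alpha beta h0 (N + 1)); fold r;
        rewrite ?plus_INR; simpl INR; lra.
Qed.
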